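(* Let $\lambda$ be a partition of length $r$, $\mu\subset\lambda$ a partition with at most $r$ parts, and $f=(f_1,\dots,f_r)\in\mathbb{Z}_{\ge0}^r$, and assume $\lambda_i-i-f_i\ge\lambda_j-j-f_j$ for all $1\le i<j\le r$. Then \[ \widetilde s_{\lambda/\mu,f}(z|\mathbf b)=\det\left(e^{[f_i|\lambda_i-\mu_j+j-i-f_i-1]}_{\lambda_i-\mu_j+j-i}(z|\tau^{j-\mu_j-1}\mathbf b)\right)_{1\le i,j\le r}. \]
   Context: $\mathbf b=(b_i)_{i\in\mathbb{Z}}$ are independent variables, $z=(z_i)_{i\ge1}$; $\tau^k\mathbf b=(b_{1+k},b_{2+k},\dots)$. For a sequence $y$ and $k\in\mathbb{Z}$, $e^{[k]}_u(y)=\prod_{i=1}^k(1+y_iu)$ ($k\ge0$), $\prod_{i=1}^{|k|}(1-y_iu)^{-1}$ ($k\le0$); $e^{[k|\ell]}_m(z|y)=[u^m]e^{[k]}_u(z)e^{[\ell]}_u(y)$, which is $0$ for $m<0$. A row-strict tableau of $(\lambda/\mu,f)$ fills each box $(i,j)$ with $\mu_i<j\le\lambda_i$ by a positive integer, strictly increasing from left to right along rows, weakly increasing from top to bottom along columns, with all entries of row $i$ at most $f_i$. $\widetilde s_{\lambda/\mu,f}(z|\mathbf b)=\sum_T\prod_{\text{entry }e\text{ in box }(i,j)}(z_e+b_{e+i-j})$, summed over all row-strict tableaux of $(\lambda/\mu,f)$. *)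

From HB Require Import structures.
From mathcomp Require Import all_boot all_order all_algebra.
Set Implicit Arguments. Unset Strict Implicit. Unset Printing Implicit Defensive.
Import Order.TTheory GRing.Theory Num.Theory.
Local Open Scope ring_scope.

(* Formal power series in u over R, represented by their coefficient
   sequences (coefficient of u^m at index m), with the Cauchy product. *)
Definition ser_mul (R : comNzRingType) (f g : nat -> R) : nat -> R :=
  fun m => \sum_(j < m.+1) f j * g (m - j)%N.
Definition ser_one (R : comNzRingType) : nat -> R := fun m => (m == 0%N)%:R.
Definition ser_1plus (R : comNzRingType) (c : R) : nat -> R :=
  fun m => if m == 0%N then 1 else if m == 1%N then c else 0.
(* the series (1 - c u)^{-1} = sum_m c^m u^m *)
Definition ser_geom (R : comNzRingType) (c : R) : nat -> R := fun m => c ^+ m.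

(* e^{[k]}_u(y) for k in Z; sequences y are indexed from 1 (y i = y_i). *)
Definition e_ser (R : comNzRingType) (k : int) (y : nat -> R) : nat -> R :=
  if (0 <= k)%R then \big[@ser_mul R/@ser_one R]_(i < absz k) ser_1plus (y i.+1)
  else \big[@ser_mul R/@ser_one R]_(i < absz k) ser_geom (y i.+1).

Definition e_bar (R : comNzRingType) (k l m : int) (z y : nat -> R) : R :=
  if (m < 0)%R then 0 else ser_mul (e_ser k z) (e_ser l y) (absz m).

Definition tau (R : comNzRingType) (k : int) (b : int -> R) : nat -> R :=
  fun i => b (i%:Z + k).

(* Rows are 0-based (row i here is row i+1 of the paper), columns 1-based.
   Box (i,j) belongs to lambda/mu iff mu_i < j <= lambda_i. *)
Definition in_shape (lam mu : nat -> nat) (i j : nat) : bool :=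
  (mu i < j)%N && (j <= lam i)%N.

Definition col_bound (r : nat) (lam : nat -> nat) : nat := (\max_(i < r) lam i).+1.
Definition val_bound (r : nat) (f : nat -> nat) : nat := (\max_(i < r) f i).+1.

(* Row-strict tableaux of (lam/mu, f), encoded as finite functions on
   'I_r * 'I_L that vanish outside the shape. *)
Definition is_rs_tableau (r : nat) (lam mu f : nat -> nat) (L M : nat)
    (T : {ffun 'I_r * 'I_L -> 'I_M}) : bool :=
  [&& [forall ij : 'I_r * 'I_L,
        if in_shape lam mu ij.1 ij.2
        then (0 < T ij)%N && (T ij <= f ij.1)%N
        else (T ij == 0%N :> nat)],
      [forall i : 'I_r, forall j : 'I_L, forall j' : 'I_L,
        [&& in_shape lam mu i j, in_shape lam mu i j' & (j < j')%N]
          ==> (T (i, j) < T (i, j'))%N] &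
      [forall i : 'I_r, forall i' : 'I_r, forall j : 'I_L,
        [&& in_shape lam mu i j, in_shape lam mu i' j & (i < i')%N]
          ==> (T (i, j) <= T (i', j))%N]].

Definition tab_weight (R : comNzRingType) (r : nat) (lam mu : nat -> nat) (L M : nat)
    (z : nat -> R) (b : int -> R) (T : {ffun 'I_r * 'I_L -> 'I_M}) : R :=
  \prod_(ij : 'I_r * 'I_L | in_shape lam mu ij.1 ij.2)
     (z (T ij) + b ((T ij)%:Z + (ij.1.+1)%:Z - (ij.2)%:Z)).

Definition tab_type (r : nat) (lam f : nat -> nat) : finType :=
  {ffun 'I_r * 'I_(col_bound r lam) -> 'I_(val_bound r f)}.

Definition stilde (R : comNzRingType) (r : nat) (lam mu f : nat -> nat)
    (z : nat -> R) (b : int -> R) : R :=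
  \sum_(T : tab_type r lam f | is_rs_tableau lam mu f T)
     tab_weight lam mu z b T.

From HB Require Import structures.
From mathcomp Require Import all_boot all_order all_algebra zify ring perm.
Set Implicit Arguments. Unset Strict Implicit. Unset Printing Implicit Defensive.
Import Order.TTheory GRing.Theory Num.Theory.
Local Open Scope ring_scope.

(* The proof is by induction on |f| = f_1 + ... + f_r.  Let k be the last row
   whose flag f_k is maximal (and positive).  Row strictness and the flag bound
   allow the value f_k in row k only in its last box (k, lam_k).  Tableaux
   without it there are the tableaux for the flag f' (f_k lowered by one);
   erasing it from the others gives the tableaux of (lam'/mu, f'), lam_k
   lowered by one, and this happens only when the box is a removable corner:
     s(lam/mu, f) = s(lam/mu, f') + [corner] c_k s(lam'/mu, f'),
   c_k = z_{f_k} + b_{f_k + k - lam_k}.  On the determinant side row k obeys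
   the Pieri-type rule
     e^{[p+1|q]}_m = e^{[p|q+1]}_m + (z_{p+1} + y_{p+2-m}) e^{[p|q]}_{m-1},
   so multilinearity of the determinant gives the same recursion; when the box
   is not a corner the second determinant vanishes (two equal rows, or a zero
   block).  For f = 0 both sides equal [lam = mu] (the matrix is triangular). *)

Section PowerSeries.
Variable R : comNzRingType.
Implicit Types (A B W X : nat -> R) (c : R).

Lemma eq_ser_mull A A' W m : (forall j, A j = A' j) ->
  ser_mul A W m = ser_mul A' W m.
Proof. by move=> eqA; apply: eq_bigr => j _; rewrite eqA. Qed.

Lemma eq_ser_mulr A W W' m : (forall j, W j = W' j) ->
  ser_mul A W m = ser_mul A W' m.
Proof. by move=> eqW; apply: eq_bigr => j _; rewrite eqW. Qed.

Lemma ser_mulC A W m : ser_mul A W m = ser_mul W A m.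
Proof.
rewrite /ser_mul [LHS](reindex_inj rev_ord_inj) /=.
apply: eq_bigr => i _; rewrite mulrC; congr (_ * _); congr (_ _).
by have := ltn_ord i; lia.
Qed.

Lemma ser_mul0 A W : ser_mul A W 0 = A 0%N * W 0%N.
Proof. by rewrite /ser_mul big_ord_recr big_ord0 /= add0r. Qed.

Lemma ser_mul1 A j : ser_mul A (ser_one R) j = A j.
Proof.
rewrite /ser_mul big_ord_recr /= subnn /ser_one eqxx mulr1 big1 ?add0r // => i _.
have Hi := ltn_ord i.
have -> : ((j - i)%N == 0%N) = false by apply/eqP; lia.
by rewrite mulr0.
Qed.

Lemma ser_mulDl A B c W m :
  ser_mul (fun j => A j + c * B j) W m = ser_mul A W m + c * ser_mul B W m.
Proof.
rewrite /ser_mul mulr_sumr -big_split /=; apply: eq_bigr => i _.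
by rewrite mulrDl mulrA.
Qed.

Definition ser_shift A : nat -> R := fun j => if j is j'.+1 then A j' else 0.

Lemma ser_mul_shiftl A W m : ser_mul (ser_shift A) W m = ser_shift (ser_mul A W) m.
Proof.
rewrite /ser_mul; case: m => [|m] /=; first by rewrite big_ord_recr big_ord0 /= mul0r add0r.
rewrite big_ord_recl /= mul0r add0r.
by apply: eq_bigr => i _; rewrite /bump /= add1n subSS.
Qed.

Lemma ser_mul_1plus A c j : ser_mul A (ser_1plus c) j = A j + c * ser_shift A j.
Proof.
rewrite /ser_mul; case: j => [|j].
  by rewrite big_ord_recr big_ord0 /= /ser_1plus /= add0r mulr1 mulr0 addr0.
rewrite big_ord_recr /= subnn /ser_1plus /= mulr1.
case: j => [|j]; first by rewrite big_ord_recr big_ord0 /= add0r mulrC addrC.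
rewrite big_ord_recr /= subSn // subnn /= big1 ?add0r; first by rewrite addrC mulrC.
move=> i _; have Hi := ltn_ord i.
rewrite ifF; last by apply/eqP; lia.
by rewrite ifF ?mulr0 //; apply/eqP; lia.
Qed.

(* (A (1 + c u)) W = A W + c u (A W), without general associativity. *)
Lemma ser_mul_1plusl A c W m :
  ser_mul (ser_mul A (ser_1plus c)) W m = ser_mul A W m + c * ser_shift (ser_mul A W) m.
Proof.
rewrite (@eq_ser_mull _ (fun j => A j + c * ser_shift A j)); last first.
  by move=> j; rewrite ser_mul_1plus.
by rewrite ser_mulDl ser_mul_shiftl.
Qed.

Lemma ser_mulA_1plus A W c j :
  ser_mul (ser_mul A W) (ser_1plus c) j = ser_mul A (ser_mul W (ser_1plus c)) j.
Proof.
rewrite ser_mul_1plus.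
rewrite (@eq_ser_mulr A (ser_mul W (ser_1plus c)) (fun j => W j + c * ser_shift W j)); last first.
  by move=> k; rewrite ser_mul_1plus.
rewrite [RHS]ser_mulC ser_mulDl ser_mul_shiftl [ser_mul W A j]ser_mulC.
by congr (_ + _ * _); case: j => [|j] //=; rewrite ser_mulC.
Qed.

Lemma ser_1plus_cancel U V c :
  (forall j, ser_mul U (ser_1plus c) j = ser_mul V (ser_1plus c) j) -> forall j, U j = V j.
Proof.
move=> eqUV; elim=> [|j IHj]; first by have := eqUV 0%N; rewrite !ser_mul_1plus /= !mulr0 !addr0.
by have := eqUV j.+1; rewrite !ser_mul_1plus /= IHj => /addIr.
Qed.

Lemma ser_mul_geomS X c j :
  ser_mul X (ser_geom c) j.+1 = X j.+1 + c * ser_mul X (ser_geom c) j.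
Proof.
rewrite /ser_mul big_ord_recr /= subnn /ser_geom expr0 mulr1 addrC; congr (_ + _).
by rewrite mulr_sumr; apply: eq_bigr => i _; rewrite subSn ?exprS 1?mulrCA // -ltnS.
Qed.

Lemma ser_geomK X c j : ser_mul (ser_mul X (ser_geom c)) (ser_1plus (- c)) j = X j.
Proof.
rewrite ser_mul_1plus; case: j => [|j] /=; last by rewrite ser_mul_geomS mulNr addrK.
by rewrite ser_mul0 /ser_geom expr0 mulr1 mulr0 addr0.
Qed.

Lemma ser_mulA_geom A W d j :
  ser_mul (ser_mul A W) (ser_geom d) j = ser_mul A (ser_mul W (ser_geom d)) j.
Proof.
apply: (@ser_1plus_cancel _ _ (- d)) => k; rewrite ser_geomK ser_mulA_1plus.
by apply: eq_ser_mulr => i; rewrite ser_geomK.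
Qed.

Definition ser_prod n (F : nat -> nat -> R) : nat -> R :=
  \big[@ser_mul R/@ser_one R]_(i < n) F i.

Lemma ser_prod0 F j : ser_prod 0 F j = ser_one R j.
Proof. by rewrite /ser_prod big_ord0. Qed.

Lemma ser_prod_recl n F j : ser_prod n.+1 F j = ser_mul (F 0%N) (ser_prod n (fun i => F i.+1)) j.
Proof. by rewrite /ser_prod big_ord_recl. Qed.

Lemma ser_prod_recr n F :
  (forall i A W j, ser_mul (ser_mul A W) (F i) j = ser_mul A (ser_mul W (F i)) j) ->
  forall j, ser_prod n.+1 F j = ser_mul (ser_prod n F) (F n) j.
Proof.
elim: n F => [|n IHn] F FA j.
  rewrite ser_prod_recl (@eq_ser_mulr _ _ (ser_one R)); last by move=> k; rewrite ser_prod0.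
  rewrite ser_mul1 (@eq_ser_mull _ (ser_one R)); last by move=> k; rewrite ser_prod0.
  by rewrite ser_mulC ser_mul1.
rewrite ser_prod_recl (@eq_ser_mulr _ _ (ser_mul (ser_prod n (fun i => F i.+1)) (F n.+1))).
  by rewrite -FA; apply: eq_ser_mull => k; rewrite ser_prod_recl.
by move=> k; rewrite IHn // => i; apply: FA.
Qed.

Lemma ser_prod_const n (F : nat -> nat -> R) : (forall i, F i 0%N = 1) -> ser_prod n F 0%N = 1.
Proof.
elim: n F => [|n IHn] F F0; first by rewrite ser_prod0.
by rewrite ser_prod_recl ser_mul0 IHn ?F0 ?mulr1.
Qed.

Lemma ser_mul_deg A W d1 d2 m : (forall j, (d1 < j)%N -> A j = 0) ->
  (forall j, (d2 < j)%N -> W j = 0) -> (d1 + d2 < m)%N -> ser_mul A W m = 0.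
Proof.
move=> degA degW Hm; apply: big1 => i _.
case: (ltnP d1 i) => Hi; first by rewrite degA ?mul0r.
by rewrite degW ?mulr0 //; have := ltn_ord i; lia.
Qed.

End PowerSeries.

Section ElementarySeries.
Variable R : comNzRingType.
Implicit Types (A W : nat -> R) (c : R) (y : nat -> R).

Lemma e_serE k y j : e_ser k y j =
  (if (0 <= k)%R then ser_prod (absz k) (fun i => ser_1plus (y i.+1))
   else ser_prod (absz k) (fun i => ser_geom (y i.+1))) j.
Proof. by rewrite /e_ser; case: ifP. Qed.

Lemma e_ser0 k y : e_ser k y 0%N = 1 :> R.
Proof.
by rewrite e_serE; case: ifP => _; apply: ser_prod_const => i //; rewrite /ser_geom expr0.
Qed.

Lemma e_ser_deg (n : nat) y j : (n < j)%N -> e_ser n%:Z y j = 0 :> R.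
Proof.
rewrite e_serE /=; elim: n j => [|n IHn] j Hj; first by rewrite ser_prod0 /ser_one; case: j Hj.
rewrite ser_prod_recr; last by move=> *; apply: ser_mulA_1plus.
rewrite ser_mul_1plus IHn; last by lia.
by case: j Hj => [|j] //= Hj; rewrite IHn ?mulr0 ?add0r //; lia.
Qed.

Lemma e_ser_pos (n : nat) y j :
  e_ser (n.+1)%:Z y j = ser_mul (e_ser n%:Z y) (ser_1plus (y n.+1)) j.
Proof.
rewrite e_serE /= ser_prod_recr; last by move=> *; apply: ser_mulA_1plus.
by apply: eq_ser_mull => i; rewrite e_serE.
Qed.

Lemma e_ser_neg (n : nat) y j :
  e_ser (- (n.+1)%:Z) y j = ser_mul (e_ser (- n%:Z) y) (ser_geom (y n.+1)) j.
Proof.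
rewrite e_serE /= ser_prod_recr; last by move=> *; apply: ser_mulA_geom.
apply: eq_ser_mull => i; rewrite e_serE.
by case: n => [|n] //=; rewrite !ser_prod0.
Qed.

Definition e_step (l : int) y : R := if (0 < l)%R then y (absz l) else - y (absz l).+1.

Lemma e_ser_step l y j : e_ser l y j = ser_mul (e_ser (l - 1) y) (ser_1plus (e_step l y)) j.
Proof.
rewrite /e_step; case: (ltrP 0 l) => Hl.
  have [n ->] : exists n : nat, l = (n.+1)%:Z by exists (absz l).-1; lia.
  by rewrite e_ser_pos /=; congr (ser_mul (e_ser _ _) _ _); lia.
have [n ->] : exists n : nat, l = - n%:Z by exists (absz l); lia.
have -> : - n%:Z - 1 = - (n.+1)%:Z by lia.
have -> : absz (- n%:Z) = n by lia.
rewrite -(ser_geomK (e_ser (- n%:Z) y) (y n.+1) j).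
by apply: eq_ser_mull => i; rewrite e_ser_neg.
Qed.

Definition coef_int (F : nat -> R) (m : int) : R := if (m < 0)%R then 0 else F (absz m).

Lemma eq_coef_int F G m : (forall j, F j = G j) -> coef_int F m = coef_int G m.
Proof. by move=> eqFG; rewrite /coef_int eqFG. Qed.

Lemma coef_int_1plusl A c W m :
  coef_int (ser_mul (ser_mul A (ser_1plus c)) W) m =
  coef_int (ser_mul A W) m + c * coef_int (ser_mul A W) (m - 1).
Proof.
rewrite /coef_int; case: (ltrP m 0) => Hm; first by rewrite ifT ?mulr0 ?addr0 //; lia.
rewrite ser_mul_1plusl; congr (_ + _ * _).
case: (ltrP (m - 1) 0) => Hm1; first by have -> : m = 0 by lia.
by have -> : absz m = (absz (m - 1)).+1 by lia.
Qed.

Lemma e_bar_coef k l m z y : e_bar k l m z y = coef_int (ser_mul (e_ser k z) (e_ser l y)) m.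
Proof. by []. Qed.

Lemma e_bar_deg (k l : nat) m z y : ((k + l)%:Z < m)%R -> e_bar k%:Z l%:Z m z y = 0.
Proof.
move=> Hm; rewrite /e_bar ifF; last by apply/negbTE; rewrite -leNgt; lia.
by apply: (@ser_mul_deg _ _ _ k l) => [j|j|]; [apply: e_ser_deg|apply: e_ser_deg|lia].
Qed.

(* Pieri-type rule: with q = m - p - 2,
     e^{[p+1|q]}_m = e^{[p|q+1]}_m + c e^{[p|q]}_{m-1},
   where c = z_{p+1} + y_{p+2-m} (c is irrelevant when m > p + 1, since then
   the last term vanishes). *)
Lemma e_bar_pieri (p : nat) (m : int) z y c :
  (m <= (p.+1)%:Z -> c = z p.+1 + y (absz ((p.+1)%:Z - m + 1))) ->
  e_bar (p.+1)%:Z (m - (p.+1)%:Z - 1) m z y =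
  e_bar p%:Z (m - p%:Z - 1) m z y + c * e_bar p%:Z (m - 1 - p%:Z - 1) (m - 1) z y.
Proof.
move=> Ec; set l := m - (p.+1)%:Z - 1.
have -> : m - p%:Z - 1 = l + 1 by rewrite /l; lia.
have -> : m - 1 - p%:Z - 1 = l by rewrite /l; lia.
have small_or_vanish : (m <= (p.+1)%:Z)%R \/ e_bar p%:Z l (m - 1) z y = 0.
  case: (lerP m (p.+1)%:Z) => Hm; [by left | right].
  have -> : l = (absz l)%:Z by rewrite /l; lia.
  by apply: e_bar_deg; rewrite /l; lia.
rewrite !e_bar_coef; set A := e_ser p%:Z z.
rewrite (@eq_coef_int _ (ser_mul (ser_mul A (ser_1plus (z p.+1))) (e_ser l y))); last first.
  by move=> j; apply: eq_ser_mull => i; rewrite e_ser_pos.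
rewrite coef_int_1plusl (@eq_coef_int (ser_mul A (e_ser (l + 1) y))
  (ser_mul (ser_mul (e_ser l y) (ser_1plus (e_step (l + 1) y))) A)); last first.
  by move=> j; rewrite ser_mulC; apply: eq_ser_mull => i; rewrite e_ser_step addrK.
rewrite coef_int_1plusl !(@eq_coef_int (ser_mul (e_ser l y) A) (ser_mul A (e_ser l y)));
  try by move=> j; rewrite ser_mulC.
rewrite -!e_bar_coef; case: small_or_vanish => [Hm|->]; last by rewrite !mulr0 !addr0.
rewrite (Ec Hm) /e_step ifF; last by apply/negbTE; rewrite -leNgt /l; lia.
have -> : (absz (l + 1)).+1 = absz ((p.+1)%:Z - m + 1) by rewrite /l; lia.
ring.
Qed.

End ElementarySeries.

Definition decr (k : nat) (g : nat -> nat) : nat -> nat :=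
  fun i => if i == k then (g i).-1 else g i.

(* The last box (k, lam_k) of row k of lam/mu can be removed, leaving a skew
   shape: it lies in lam/mu and row k+1 is strictly shorter. *)
Definition corner (r : nat) (lam mu : nat -> nat) (k : nat) : bool :=
  (mu k < lam k)%N && ((k.+1 < r)%N ==> (lam k.+1 < lam k)%N).

Section Tableaux.
Variable R : comNzRingType.
Variables (z : nat -> R) (b : int -> R) (r L M : nat).
Notation tab := {ffun 'I_r * 'I_L -> 'I_M}.

Definition tab_sum (lam mu f : nat -> nat) : R :=
  \sum_(T : tab | is_rs_tableau lam mu f T) tab_weight lam mu z b T.

Definition rs_flagged (lam mu f : nat -> nat) (T : tab) : Prop :=
  forall ij : 'I_r * 'I_L, if in_shape lam mu ij.1 ij.2
    then (0 < T ij)%N && (T ij <= f ij.1)%N else (T ij == 0%N :> nat).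
Definition rs_rows (lam mu : nat -> nat) (T : tab) : Prop :=
  forall (i : 'I_r) (j j' : 'I_L), in_shape lam mu i j -> in_shape lam mu i j' ->
    (j < j')%N -> (T (i, j) < T (i, j'))%N.
Definition rs_cols (lam mu : nat -> nat) (T : tab) : Prop :=
  forall (i i' : 'I_r) (j : 'I_L), in_shape lam mu i j -> in_shape lam mu i' j ->
    (i < i')%N -> (T (i, j) <= T (i', j))%N.

Lemma rs_tableauP lam mu f (T : tab) :
  reflect [/\ rs_flagged lam mu f T, rs_rows lam mu T & rs_cols lam mu T]
          (is_rs_tableau lam mu f T).
Proof.
apply: (iffP and3P) => [[/forallP H1 /forallP H2 /forallP H3] | [H1 H2 H3]]; split => //.
- move=> i j j' Hj Hj' Hjj'.
  by have /forallP/(_ j)/forallP/(_ j')/implyP := H2 i; apply; rewrite Hj Hj' Hjj'.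
- move=> i i' j Hj Hj' Hii'.
  by have /forallP/(_ i')/forallP/(_ j)/implyP := H3 i; apply; rewrite Hj Hj' Hii'.
- by apply/forallP.
- apply/forallP => i; apply/forallP => j; apply/forallP => j'; apply/implyP.
  by case/and3P; apply: H2.
- apply/forallP => i; apply/forallP => i'; apply/forallP => j; apply/implyP.
  by case/and3P; apply: H3.
Qed.

Lemma tab_sum_flag0 lam mu f :
  (forall i, (i < r)%N -> (lam i < L)%N) -> (0 < M)%N ->
  (forall i, (i < r)%N -> f i = 0%N) -> (forall i, (i < r)%N -> (mu i <= lam i)%N) ->
  tab_sum lam mu f = \prod_(i < r) ((lam i == mu i)%:R : R).
Proof.
move=> HL M0 Hf0 Hsub; case: (boolP [forall i : 'I_r, lam i == mu i]) => [/forallP lam_mu|].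
  rewrite [RHS]big1 => [|i _]; last by rewrite (eqP (lam_mu i)) eqxx.
  have empty (i : 'I_r) (j : nat) : in_shape lam mu i j = false.
    by rewrite /in_shape (eqP (lam_mu i)) ltnNge andNb.
  rewrite /tab_sum (big_pred1 [ffun => Ordinal M0]).
    by rewrite /tab_weight big_pred0 // => ij; rewrite empty.
  move=> T; apply/rs_tableauP/eqP => [[H1 _ _]|->].
    apply/ffunP => q; rewrite ffunE; apply: val_inj => /=.
    by have := H1 q; rewrite empty => /eqP.
  by split=> [q|i j j'|i i' j]; rewrite empty // ffunE.
move/forallPn => [i /eqP lam_mu_i].
rewrite [RHS](bigD1 i) //= (introF eqP lam_mu_i) mul0r.
apply: big1 => T /rs_tableauP[H1 _ _]; exfalso.
have := H1 (i, Ordinal (HL i (ltn_ord i))); rewrite /in_shape /=.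
have := Hsub i (ltn_ord i); have := Hf0 i (ltn_ord i) => Hf Hs.
have -> : (mu i < lam i)%N by lia.
by rewrite leqnn /= Hf; lia.
Qed.

Definition tab_set (T : tab) (p : 'I_r * 'I_L) (v : 'I_M) : tab :=
  [ffun q => if q == p then v else T q].

Section LargestEntry.
Variables (lam mu f : nat -> nat) (k : nat).
Hypothesis kr : (k < r)%N.
Hypothesis HL : forall i, (i < r)%N -> (lam i < L)%N.
Hypothesis HM : (f k < M)%N.
Hypothesis fk_pos : (0 < f k)%N.
Hypothesis fk_max : forall i, (i < r)%N -> (f i <= f k)%N.
Hypothesis fk_last : forall i, (k < i < r)%N -> (f i < f k)%N.
Hypothesis Hlam : forall i j : nat, (i <= j < r)%N -> (lam j <= lam i)%N.
Hypothesis Hmu : forall i j : nat, (i <= j < r)%N -> (mu j <= mu i)%N.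

Let kk : 'I_r := Ordinal kr.
Let cc : 'I_L := Ordinal (HL kr).
Let N : 'I_M := Ordinal HM.
Let Z0 : 'I_M := Ordinal (leq_ltn_trans (leq0n _) HM).

Lemma eq_corner_box (ij : 'I_r * 'I_L) :
  (ij == (kk, cc)) = (ij.1 == k :> nat) && (ij.2 == lam k :> nat).
Proof. by case: ij. Qed.

Lemma in_shape_decr i j :
  in_shape (decr k lam) mu i j = in_shape lam mu i j && ~~ ((i == k) && (j == lam k)).
Proof.
rewrite /in_shape /decr; case: eqP => [->|_] /=; last by rewrite andbT.
case: (ltnP (mu k) j) => Hj //=.
apply/idP/idP => [H|/andP[H1 /eqP H2]]; last by lia.
by apply/andP; split; [lia | apply/eqP; lia].
Qed.

Lemma rs_tableau_decr_flag (T : tab) :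
  (is_rs_tableau lam mu f T && (T (kk, cc) != N)) = is_rs_tableau lam mu (decr k f) T.
Proof.
apply/idP/idP.
- case/andP => /rs_tableauP [H1 H2 H3] HN; apply/rs_tableauP; split => //.
  move=> [i j] /=; have := H1 (i, j); rewrite /decr /=; case: ifP => Hs //.
  case: eqP => Hi //; case/andP => H0 Hle; apply/andP; split => //.
  have Ei : i = kk by apply: val_inj.
  rewrite Ei in Hs H0 Hle *; clear Hi Ei.
  have Hks : in_shape lam mu k (lam k).
    by move: Hs; rewrite /in_shape /= => /andP[Ha Hb]; apply/andP; split => //; lia.
  have := H1 (kk, cc); rewrite /= Hks => /andP[_ Hc].
  case: (ltnP j (lam k)) => Hj; first by have := H2 kk j cc Hs Hks Hj; rewrite /=; lia.
  have -> : j = cc by apply: val_inj; move: Hs; rewrite /in_shape /=; lia.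
  have : (T (kk, cc) : nat) != N by apply: contra HN => /eqP E; apply/eqP/val_inj.
  by rewrite /=; lia.
- move/rs_tableauP => [H1 H2 H3]; apply/andP; split.
    apply/rs_tableauP; split => // -[i j]; have := H1 (i, j); rewrite /decr /=.
    case: ifP => // _; case: eqP => // _ /andP[Ha Hb]; apply/andP; split => //; lia.
  apply/eqP => HN; have := H1 (kk, cc); rewrite /decr /= eqxx HN /=.
  by case: ifP => _; lia.
Qed.

Section Corner.
Hypothesis is_corner : corner r lam mu k.

Lemma corner_in_shape : in_shape lam mu kk cc.
Proof. by case/andP: is_corner => Hv1 _; rewrite /in_shape /= Hv1 leqnn. Qed.

Lemma rs_tableau_erase (U : tab) : is_rs_tableau lam mu f U -> U (kk, cc) = N ->
  is_rs_tableau (decr k lam) mu (decr k f) (tab_set U (kk, cc) Z0).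
Proof.
move=> /rs_tableauP [H1 H2 H3] HN; apply/rs_tableauP; split.
- move=> [i j]; rewrite ffunE eq_corner_box in_shape_decr /=.
  case: (boolP ((i == k :> nat) && (j == lam k :> nat))) => [_|Hne]; first by rewrite andbF.
  rewrite andbT; have := H1 (i, j); rewrite /=; case: ifP => // Hs.
  case/andP => H0 Hle; apply/andP; split => //; rewrite /decr.
  case: eqP => Hi //.
  have Ei : i = kk by apply: val_inj.
  rewrite Ei in Hs H0 Hle *; clear Ei.
  have Hj : (j < lam k)%N.
    by move: Hne Hs; rewrite /in_shape Hi eqxx /= => /eqP Hne /andP[_ Hb]; lia.
  by have := H2 kk j cc Hs corner_in_shape Hj; rewrite HN /=; lia.
- move=> i j j'; rewrite !in_shape_decr !ffunE !eq_corner_box /=.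
  by move=> /andP[Hs /negbTE ->] /andP[Hs' /negbTE ->]; apply: H2.
- move=> i i' j; rewrite !in_shape_decr !ffunE !eq_corner_box /=.
  by move=> /andP[Hs /negbTE ->] /andP[Hs' /negbTE ->]; apply: H3.
Qed.

Lemma rs_tableau_fill (T : tab) : is_rs_tableau (decr k lam) mu (decr k f) T ->
  is_rs_tableau lam mu f (tab_set T (kk, cc) N).
Proof.
case/andP: is_corner => Hv1 /implyP Hv2.
move=> /rs_tableauP [H1 H2 H3]; apply/rs_tableauP; split.
- move=> [i j]; rewrite ffunE eq_corner_box /=.
  case: (boolP ((i == k :> nat) && (j == lam k :> nat))) => [/andP[/eqP Hi /eqP Hj]|Hne].
    by have := corner_in_shape; rewrite /in_shape /= Hi Hj => ->; rewrite /= fk_pos leqnn.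
  have := H1 (i, j); rewrite in_shape_decr /= Hne andbT.
  case: ifP => // _ /andP[H0 Hle]; rewrite H0 /=.
  by move: Hle; rewrite /decr; case: eqP => _ //; lia.
- move=> i j j' Hs Hs' Hjj'; rewrite !ffunE !eq_corner_box /=.
  case: (boolP ((i == k :> nat) && (j == lam k :> nat))) => [/andP[/eqP Hi /eqP Hj]|Hne].
    by move: Hs'; rewrite /in_shape Hi; lia.
  case: ifP => [/andP[/eqP Hi /eqP Hj']|Hne'].
    have := H1 (i, j); rewrite in_shape_decr /= Hs Hne /decr Hi eqxx /= => /andP[_ Hle].
    by lia.
  by apply: H2 => //; rewrite in_shape_decr ?Hs ?Hs' ?(negbTE Hne) ?Hne'.
- move=> i i' j Hs Hs' Hii'; rewrite !ffunE !eq_corner_box /=.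
  case: (boolP ((i == k :> nat) && (j == lam k :> nat))) => [/andP[/eqP Hi /eqP Hj]|Hne].
    have Hk1 : (k.+1 < r)%N by have := ltn_ord i'; lia.
    have := Hv2 Hk1; have := Hlam (i := k.+1) (j := i'); move: Hs'; rewrite /in_shape.
    by have := ltn_ord i'; lia.
  case: ifP => [/andP[/eqP Hi' /eqP Hj]|Hne'].
    have := H1 (i, j); rewrite in_shape_decr /= Hs Hne /= => /andP[_ Hle].
    by have := fk_max (ltn_ord i); move: Hle; rewrite /decr; case: eqP => Hik; lia.
  by apply: H3 => //; rewrite in_shape_decr ?Hs ?Hs' ?(negbTE Hne) ?Hne'.
Qed.

Lemma tab_weight_fill (T : tab) :
  tab_weight lam mu z b (tab_set T (kk, cc) N) =
  (z (f k) + b ((f k)%:Z + (k.+1)%:Z - (lam k)%:Z)) * tab_weight (decr k lam) mu z b T.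
Proof.
rewrite /tab_weight (bigD1 (kk, cc)) /=; last exact: corner_in_shape.
rewrite ffunE eqxx; congr (_ * _).
apply: eq_big => [[i j]|[i j]]; first by rewrite in_shape_decr eq_corner_box.
by rewrite ffunE eq_corner_box => /andP[_ /negbTE ->].
Qed.

End Corner.

(* If f_k sits in the last box of row k, that box is a corner: otherwise the
   box below it would carry an entry >= f_k > f_{k+1}. *)
Lemma largest_entry_corner (T : tab) : is_rs_tableau lam mu f T -> T (kk, cc) = N ->
  corner r lam mu k.
Proof.
move=> /rs_tableauP[H1 H2 H3] HN.
have := H1 (kk, cc); rewrite /= HN /=; case: ifP => Hs; last by move/eqP; lia.
move=> _; have Hv1 : (mu k < lam k)%N by move: Hs; rewrite /in_shape /=; lia.
rewrite /corner Hv1; apply/implyP => Hk1; rewrite ltnNge; apply/negP => Hle.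
have H4 : (lam k.+1 <= lam k)%N by apply: Hlam; rewrite leqnSn Hk1.
have H5 : (mu k.+1 <= mu k)%N by apply: Hmu; rewrite leqnSn Hk1.
have H6 : (f k.+1 < f k)%N by apply: fk_last; rewrite ltnSn Hk1.
have Hs1 : in_shape lam mu (Ordinal Hk1) cc by rewrite /in_shape /=; lia.
have := H3 kk (Ordinal Hk1) cc Hs Hs1 (ltnSn k).
by have := H1 (Ordinal Hk1, cc); rewrite /= Hs1 HN /= => /andP[_ Hf1]; lia.
Qed.

Lemma tab_sum_rec : tab_sum lam mu f = tab_sum lam mu (decr k f) +
  (if corner r lam mu k
   then (z (f k) + b ((f k)%:Z + (k.+1)%:Z - (lam k)%:Z)) * tab_sum (decr k lam) mu (decr k f)
   else 0).
Proof.
rewrite /tab_sum (bigID (fun T : tab => T (kk, cc) == N)) /= addrC; congr (_ + _).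
  by apply: eq_bigl => T; rewrite rs_tableau_decr_flag.
case: ifP => [is_corner | not_corner]; last first.
  apply: big1 => T /andP[HT /eqP HN]; exfalso.
  by move: not_corner; rewrite (largest_entry_corner HT HN).
rewrite (reindex_onto (fun T => tab_set T (kk, cc) N) (fun T => tab_set T (kk, cc) Z0)) /=.
  rewrite mulr_sumr; apply: eq_big => [T|T _]; last by rewrite tab_weight_fill.
  apply/idP/idP => [/andP[/andP[HT _] /eqP <-]|HT].
    by apply: rs_tableau_erase => //; rewrite ffunE eqxx.
  rewrite rs_tableau_fill //= ffunE !eqxx /=.
  apply/eqP/ffunP => q; rewrite !ffunE; case: eqP => [->|] //.
  move/rs_tableauP: HT => [H1 _ _]; have := H1 (kk, cc).
  by rewrite in_shape_decr /= !eqxx /= andbF => /eqP H; apply: val_inj.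
move=> T /andP[_ /eqP HN]; apply/ffunP => q; rewrite !ffunE.
by case: eqP => [->|].
Qed.

End LargestEntry.

End Tableaux.

Section Determinant.
Variable R : comNzRingType.
Variables (z : nat -> R) (b : int -> R) (r : nat).

Definition jt_matrix (lam : nat -> int) (mu f : nat -> nat) : 'M[R]_r :=
  \matrix_(i < r, j < r) e_bar (f i)%:Z
    (lam i - (mu j)%:Z + (j.+1)%:Z - (i.+1)%:Z - (f i)%:Z - 1)
    (lam i - (mu j)%:Z + (j.+1)%:Z - (i.+1)%:Z) z (tau ((j.+1)%:Z - (mu j)%:Z - 1) b).

Lemma eq_jt_matrix lam1 lam2 mu f1 f2 : (forall i, (i < r)%N -> lam1 i = lam2 i) ->
  (forall i, (i < r)%N -> f1 i = f2 i) -> jt_matrix lam1 mu f1 = jt_matrix lam2 mu f2.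
Proof. by move=> eq_lam eq_f; apply/matrixP => i j; rewrite !mxE eq_lam ?eq_f. Qed.

Definition decrz (k : nat) (g : nat -> int) : nat -> int :=
  fun i => if i == k then g i - 1 else g i.

(* Row k splits by the Pieri rule; the determinant is linear in that row. *)
Lemma det_jt_rec lam mu f k (kr : (k < r)%N) : (0 < f k)%N ->
  \det (jt_matrix lam mu f) =
  \det (jt_matrix lam mu (decr k f)) +
  (z (f k) + b ((f k)%:Z + (k.+1)%:Z - lam k)) * \det (jt_matrix (decrz k lam) mu (decr k f)).
Proof.
move=> fk_pos; rewrite -[X in X + _]mul1r.
have other_rows (i : 'I_r.-1) : (lift (Ordinal kr) i == k :> nat) = false.
  by apply/negbTE; have := neq_lift (Ordinal kr) i; rewrite eq_sym.
apply: (@determinant_multilinear _ _ _ _ _ (Ordinal kr)); last 2 first.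
- by apply/matrixP => i j; rewrite !mxE /decr other_rows.
- by apply/matrixP => i j; rewrite !mxE /decr /decrz other_rows.
apply/rowP => j; rewrite !mxE /decr /decrz /= !eqxx mul1r.
have [p Ep] : exists p, f k = p.+1 by exists (f k).-1; lia.
rewrite Ep (@e_bar_pieri _ p _ _ _ (z p.+1 + b ((p.+1)%:Z + (k.+1)%:Z - lam k))).
  by congr (e_bar _ _ _ _ _ + _ * e_bar _ _ _ _ _); ring.
by move=> small_m; rewrite /tau; congr (_ + b _); lia.
Qed.

(* A square matrix whose lower-left block (rows >= k, columns <= k) vanishes is
   singular: every permutation maps some row >= k to a column <= k. *)
Lemma det_zero_block (A : 'M[R]_r) (k : 'I_r) :
  (forall i j : 'I_r, (k <= i)%N -> (j <= k)%N -> A i j = 0) -> \det A = 0.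
Proof.
move=> A0; apply: big1 => s _.
have /existsP[i /andP[Hi Hsi]] : [exists i : 'I_r, (k <= i)%N && (s i <= k)%N].
  apply/existsPn => Hn.
  pose low := [set i : 'I_r | (k <= i)%N].
  pose high := [set j : 'I_r | (k < j)%N].
  have s_low : s @: low \subset high.
    apply/subsetP => x /imsetP[i]; rewrite !inE => Hi ->.
    by have := Hn i; rewrite Hi /= -ltnNge.
  have low_high : low = k |: high.
    by apply/setP => x; rewrite !inE leq_eqVlt eq_sym -(inj_eq val_inj).
  have := subset_leq_card s_low; rewrite card_imset; last exact: perm_inj.
  by rewrite low_high cardsU1 inE ltnn /= add1n ltnn.
by rewrite (bigD1 i) //= A0 // mul0r mulr0.
Qed.

(* With zero flags the matrix is upper triangular with diagonal [lam_i = mu_i]. *)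
Lemma det_jt_flag0 (lam mu f : nat -> nat) (Hf0 : forall i, (i < r)%N -> f i = 0%N)
  (Hmu : forall i j : nat, (i <= j < r)%N -> (mu j <= mu i)%N)
  (Hsub : forall i : nat, (i < r)%N -> (mu i <= lam i)%N) :
  \det (jt_matrix (fun i => (lam i)%:Z) mu f) = \prod_(i < r) ((lam i == mu i)%:R : R).
Proof.
rewrite det_trig.
  apply: eq_bigr => i _; rewrite mxE Hf0 //.
  have := Hsub i (ltn_ord i); case: (ltngtP (lam i) (mu i)) => H Hs; first by lia.
    rewrite (_ : _ - 0%:Z - 1 = (lam i - mu i - 1)%N%:Z); last by lia.
    by rewrite e_bar_deg //; lia.
  rewrite /e_bar ifF; last by apply/negbTE; rewrite -leNgt; lia.
  have -> : absz ((lam i)%:Z - (mu i)%:Z + (i.+1)%:Z - (i.+1)%:Z)%R = 0%N by lia.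
  by rewrite ser_mul0 !e_ser0 mulr1.
apply/forallP => i; apply/forallP => j; apply/implyP => Hij; rewrite mxE Hf0 //.
have := Hsub i (ltn_ord i); have := Hmu i j; rewrite (ltnW Hij) ltn_ord => /(_ isT) H1 H2.
rewrite (_ : _ - 0%:Z - 1 = (lam i + j - mu j - i - 1)%N%:Z); last by lia.
by apply/eqP; rewrite e_bar_deg //; lia.
Qed.

End Determinant.

Definition admissible (r : nat) (lam mu f : nat -> nat) : Prop :=
  [/\ forall i j, (i <= j < r)%N -> (lam j <= lam i)%N,
      forall i j, (i <= j < r)%N -> (mu j <= mu i)%N,
      forall i, (i < r)%N -> (mu i <= lam i)%N &
      forall i j, (i < j < r)%N ->
        (lam j)%:Z - (j.+1)%:Z - (f j)%:Z <= (lam i)%:Z - (i.+1)%:Z - (f i)%:Z].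

Section Admissible.
Variables (r : nat) (lam mu f : nat -> nat) (k : nat).
Hypothesis adm : admissible r lam mu f.
Hypothesis kr : (k < r)%N.

Lemma admissible_decr_flag : (forall i, (i < r)%N -> (f i <= f k)%N) ->
  admissible r lam mu (decr k f).
Proof.
case: adm => Hlam Hmu Hsub Hf fk_max; split => // i j Hij.
have := Hf i j Hij; move: Hij => /andP[Hij Hjr].
have := fk_max i (ltn_trans Hij Hjr).
have : (lam j <= lam i)%N by apply: Hlam; rewrite Hjr andbT ltnW.
by rewrite /decr; case: eqP => Hi; case: eqP => Hj; subst; rewrite -?subn1; lia.
Qed.

(* Removing a corner box together with lowering its flag keeps the data
   admissible: lam_k - k - f_k is unchanged. *)
Lemma admissible_remove_corner : (0 < f k)%N -> corner r lam mu k ->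
  admissible r (decr k lam) mu (decr k f).
Proof.
case: adm => Hlam Hmu Hsub Hf fk_pos /andP[Hv1 /implyP Hv2]; split => //.
- move=> i j /andP[Hij Hjr]; rewrite /decr.
  have := Hlam i j; rewrite Hij Hjr => /(_ isT).
  case: eqP => Hi; case: eqP => Hj //; rewrite ?Hi ?Hj -?subn1; try lia.
  have Hk1 : (k.+1 < r)%N by lia.
  have := Hv2 Hk1; have := Hlam k.+1 j; rewrite Hjr (_ : (k.+1 <= j)%N) //; last by lia.
  by move=> /(_ isT); lia.
- by move=> i Hi; rewrite /decr; case: eqP => [->|]; [lia | move=> _; apply: Hsub].
- move=> i j Hij; rewrite /decr; have := Hf i j Hij; move: Hij => /andP[Hij Hjr].
  by case: eqP => Hi; case: eqP => Hj; subst; rewrite -?subn1; lia.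
Qed.

End Admissible.

Lemma last_max_flag (r : nat) (f : nat -> nat) : (0 < \sum_(i < r) f i)%N ->
  exists2 k, (k < r)%N & [/\ (0 < f k)%N, forall i, (i < r)%N -> (f i <= f k)%N
                           & forall i, (k < i < r)%N -> (f i < f k)%N].
Proof.
move=> sum_pos.
have [k0 fk0_pos] : exists k0 : 'I_r, (0 < f k0)%N.
  case: (boolP [exists k0 : 'I_r, (0 < f k0)%N]) => [/existsP //|/existsPn Hn].
  by move: sum_pos; rewrite big1 // => i _; have := Hn i; lia.
have [km _ km_max] := @arg_maxnP _ k0 xpredT (fun i : 'I_r => f i) isT.
have ex_max : exists k, (k < r)%N && (f k == f km) by exists km; rewrite ltn_ord eqxx.
have bounded i : (i < r)%N && (f i == f km) -> (i <= r)%N by case/andP=> Hi _; lia.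
have [k /andP[kr /eqP fk] k_last] := ex_maxnP ex_max bounded.
have fk_max i : (i < r)%N -> (f i <= f k)%N by move=> Hi; rewrite fk; apply: (km_max (Ordinal Hi)).
exists k => //; split => // [|i /andP[Hki Hi]]; first by have := fk_max k0 (ltn_ord k0); lia.
have := fk_max i Hi; rewrite leq_eqVlt => /orP[/eqP fi|//].
by have := k_last i; rewrite Hi fi fk eqxx => /(_ isT); lia.
Qed.

Section Vanishing.
Variable R : comNzRingType.
Variables (z : nat -> R) (b : int -> R) (r : nat) (lam mu f : nat -> nat) (k : nat).
Hypothesis kr : (k < r)%N.
Hypothesis Hlam : forall i j : nat, (i <= j < r)%N -> (lam j <= lam i)%N.

Notation jt_lowered := (jt_matrix z b r (decrz k (fun i => (lam i)%:Z)) mu (decr k f)).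

(* If rows k and k+1 have equal length and f_{k+1} = f_k - 1, the lowered
   rows k and k+1 of the matrix coincide. *)
Lemma det_jt_equal_rows : (k.+1 < r)%N -> lam k.+1 = lam k -> f k.+1 = (f k).-1 ->
  \det jt_lowered = 0.
Proof.
move=> k1r lam_eq f_eq.
apply: (@determinant_alternate _ _ _ (Ordinal kr) (Ordinal k1r)).
  by rewrite -(inj_eq val_inj) /= eq_sym; apply/negP => /eqP; lia.
move=> j; rewrite !mxE /decr /decrz /= eqxx.
have -> : (k.+1 == k) = false by apply/negbTE; apply/eqP; lia.
by rewrite f_eq lam_eq; congr (e_bar _ _ _ _ _); rewrite -?subn1; lia.
Qed.

(* If row k of lam/mu is empty, the lowered matrix vanishes on rows >= k and
   columns <= k: there the degree lam_i - mu_j + j - i is negative. *)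
Lemma det_jt_empty_row : (forall i j : nat, (i <= j < r)%N -> (mu j <= mu i)%N) ->
  (lam k <= mu k)%N -> \det jt_lowered = 0.
Proof.
move=> Hmu lam_mu; apply: (det_zero_block (k := Ordinal kr)) => i j /= Hki Hjk.
rewrite mxE /e_bar ifT //.
have := Hmu j k; rewrite Hjk kr => /(_ isT) Hmj.
have : (lam i <= lam k)%N by apply: Hlam; rewrite Hki ltn_ord.
by rewrite /decrz; case: eqP => Hi; lia.
Qed.

Lemma det_jt_not_corner : admissible r lam mu f ->
  (forall i, (k < i < r)%N -> (f i < f k)%N) -> ~~ corner r lam mu k ->
  \det jt_lowered = 0.
Proof.
case=> _ Hmu _ Hf fk_last; rewrite /corner negb_and negb_imply -!leqNgt.
case/orP => [|/andP[k1r lam_le]]; first by apply: det_jt_empty_row.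
have lam_eq : lam k.+1 = lam k by apply/eqP; rewrite eqn_leq lam_le Hlam // leqnSn.
have := fk_last k.+1; have := Hf k k.+1; rewrite ltnSn k1r => /(_ isT) dom /(_ isT) flt.
by apply: det_jt_equal_rows => //; lia.
Qed.

End Vanishing.

Theorem tab_sum_jt (R : comNzRingType) (z : nat -> R) (b : int -> R) (r L M n : nat)
    (lam mu f : nat -> nat) :
  (\sum_(i < r) f i)%N = n -> (0 < M)%N ->
  (forall i, (i < r)%N -> (lam i < L)%N) -> (forall i, (i < r)%N -> (f i < M)%N) ->
  admissible r lam mu f ->
  tab_sum z b r L M lam mu f = \det (jt_matrix z b r (fun i => (lam i)%:Z) mu f).
Proof.
elim: n lam f => [|n IHn] lam f sum_f M_pos HL HM adm.
  have f0 i : (i < r)%N -> f i = 0%N.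
    by move=> Hi; move: sum_f; rewrite (bigD1 (Ordinal Hi)) //=; lia.
  case: adm => _ Hmu Hsub _.
  by rewrite tab_sum_flag0 ?det_jt_flag0.
have [k kr [fk_pos fk_max fk_last]] := last_max_flag (ltac:(lia) : (0 < \sum_(i < r) f i)%N).
have sum_decr : (\sum_(i < r) decr k f i)%N = n.
  rewrite (bigD1 (Ordinal kr)) //= in sum_f; rewrite (bigD1 (Ordinal kr)) //= /decr eqxx.
  rewrite (eq_bigr (fun i : 'I_r => f i)) => [|i ne_k]; first by lia.
  by rewrite ifF //; apply: contraNF ne_k => /eqP eq_k; apply/eqP/val_inj.
have HM_decr i : (i < r)%N -> (decr k f i < M)%N.
  by move=> Hi; rewrite /decr; case: eqP => _; have := HM i Hi; lia.
have [Hlam Hmu _ _] := adm.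
rewrite (tab_sum_rec z b kr HL (HM k kr) fk_pos fk_max fk_last Hlam Hmu).
rewrite (det_jt_rec _ _ _ _ kr fk_pos).
rewrite IHn //; last exact: admissible_decr_flag.
congr (_ + _); case: ifP => [is_corner | not_corner]; last first.
  by rewrite det_jt_not_corner ?mulr0 ?not_corner.
rewrite IHn //.
- congr (_ * \det _); apply: eq_jt_matrix => // i _.
  by rewrite /decr /decrz; case: eqP => [->|]; case/andP: is_corner; lia.
- by move=> i Hi; rewrite /decr; case: eqP => _; have := HL i Hi; lia.
- exact: admissible_remove_corner.
Qed.

Theorem mainTheorem11 (R : comNzRingType) (r : nat) (lam mu f : nat -> nat)
    (z : nat -> R) (b : int -> R)
    (Hlam : forall i j : nat, (i <= j < r)%N -> (lam j <= lam i)%N)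
    (Hlen : forall i : nat, (i < r)%N -> (0 < lam i)%N)
    (Hmu : forall i j : nat, (i <= j < r)%N -> (mu j <= mu i)%N)
    (Hsub : forall i : nat, (i < r)%N -> (mu i <= lam i)%N)
    (Hf : forall i j : nat, (i < j < r)%N ->
       (lam j)%:Z - (j.+1)%:Z - (f j)%:Z <= (lam i)%:Z - (i.+1)%:Z - (f i)%:Z) :
  stilde r lam mu f z b =
  \det (\matrix_(i < r, j < r)
     e_bar (f i)%:Z
           ((lam i)%:Z - (mu j)%:Z + (j.+1)%:Z - (i.+1)%:Z - (f i)%:Z - 1)
           ((lam i)%:Z - (mu j)%:Z + (j.+1)%:Z - (i.+1)%:Z)
           z (tau ((j.+1)%:Z - (mu j)%:Z - 1) b)).
Proof.
have lam_bound i : (i < r)%N -> (lam i < col_bound r lam)%N.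
  by move=> Hi; rewrite /col_bound ltnS (leq_bigmax (Ordinal Hi)).
have f_bound i : (i < r)%N -> (f i < val_bound r f)%N.
  by move=> Hi; rewrite /val_bound ltnS (leq_bigmax (Ordinal Hi)).
exact: (tab_sum_jt z b erefl (ltn0Sn _) lam_bound f_bound (And4 Hlam Hmu Hsub Hf)).
Qed.
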